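(* Let $(K,\le)$ be a linearly ordered set which is compact in its order topology. The following are equivalent: (1) $K$ is almost totally disconnected; (2) there is a family $\{(a_i,b_i)\}_{i\in I}\subseteq K\times K$ such that (a) $a_i<b_i$ for every $i\in I$; (b) for every $x\in K$ the set $\{i\in I: a_i<x<b_i\}$ is countable; (c) for all $x<y$ in $K$ there is $i\in I$ with $x\le a_i<b_i\le y$.
   Context: For a set $\Gamma$, $\Sigma_0^1[0,1]^\Gamma$ is the subspace of $[0,1]^\Gamma$ (product topology) consisting of those $x$ with $x_\gamma\in\{0,1\}$ for all but countably many $\gamma$. A compact space is almost totally disconnected if it is homeomorphic to a subspace of $\Sigma_0^1[0,1]^\Gamma$ for some set $\Gamma$. *)

From Stdlib Require Import Reals List Classical.
Open Scope R_scope.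

Definition countable {A : Type} (S : A -> Prop) : Prop :=
  exists g : A -> nat, forall a b, S a -> S b -> g a = g b -> a = b.

Definition generated_open {X : Type} (SB : (X -> Prop) -> Prop) (U : X -> Prop) : Prop :=
  forall x, U x -> exists l : list (X -> Prop),
    (forall V, In V l -> SB V /\ V x) /\
    (forall y, (forall V, In V l -> V y) -> U y).

Definition compact_space {X : Type} (op : (X -> Prop) -> Prop) : Prop :=
  forall F : (X -> Prop) -> Prop,
    (forall U, F U -> op U) ->
    (forall x, exists U, F U /\ U x) ->
    exists l : list (X -> Prop),
      (forall U, In U l -> F U) /\ (forall x, exists U, In U l /\ U x).

Definition continuous {X Y : Type} (opX : (X -> Prop) -> Prop)
  (opY : (Y -> Prop) -> Prop) (f : X -> Y) : Prop :=
  forall W, opY W -> opX (fun x => W (f x)).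

(* f is a homeomorphism of X onto its image f(X) (with the subspace topology). *)
Definition embedding {X Y : Type} (opX : (X -> Prop) -> Prop)
  (opY : (Y -> Prop) -> Prop) (f : X -> Y) : Prop :=
  (forall x y, f x = f y -> x = y) /\
  continuous opX opY f /\
  (forall U, opX U -> exists W, opY W /\ forall x, U x <-> W (f x)).

Definition linear_order {K : Type} (le : K -> K -> Prop) : Prop :=
  (forall x, le x x) /\
  (forall x y, le x y -> le y x -> x = y) /\
  (forall x y z, le x y -> le y z -> le x z) /\
  (forall x y, le x y \/ le y x).

Definition lt_of {K : Type} (le : K -> K -> Prop) (x y : K) : Prop :=
  le x y /\ x <> y.

Definition order_subbasis {K : Type} (le : K -> K -> Prop) (V : K -> Prop) : Prop :=
  (exists a, forall y, V y <-> lt_of le y a) \/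
  (exists a, forall y, V y <-> lt_of le a y).

Definition order_open {K : Type} (le : K -> K -> Prop) : (K -> Prop) -> Prop :=
  generated_open (order_subbasis le).

Definition R_open (V : R -> Prop) : Prop :=
  forall t, V t -> exists e, 0 < e /\ forall s, Rabs (s - t) < e -> V s.

Definition prod_subbasis (Gamma : Type) (W : (Gamma -> R) -> Prop) : Prop :=
  exists (g : Gamma) (V : R -> Prop), R_open V /\ forall x, W x <-> V (x g).

Definition prod_open (Gamma : Type) : ((Gamma -> R) -> Prop) -> Prop :=
  generated_open (prod_subbasis Gamma).

Definition in_Sigma01 {Gamma : Type} (x : Gamma -> R) : Prop :=
  (forall g, 0 <= x g <= 1) /\ countable (fun g => x g <> 0 /\ x g <> 1).

Definition almost_totally_disconnected {X : Type} (op : (X -> Prop) -> Prop) : Prop :=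
  exists (Gamma : Type) (f : X -> (Gamma -> R)),
    (forall x, in_Sigma01 (f x)) /\ embedding op (prod_open Gamma) f.

(* (2) => (1): an order version of Urysohn's lemma (a jump gives a clopen
   indicator, a dense interval a dyadic chain) provides for each interval a
   continuous F_i, 0 up to a_i and 1 from b_i; the map x |-> (F_i x)_i is the
   embedding, fractional exactly on the countably many intervals around x.

   (1) => (2): for an embedding f, take as intervals the (a, b) that are
   components of {z | f z g in (r, s)} for a coordinate g and a dyadic band
   (r, s) inside [0, 1].  The band and g determine such an interval among
   those containing a given point, giving countability; compactness produces
   one inside any [x, y] with f x g <> f y g. *)

From Stdlib Require Import Reals List Classical ClassicalEpsilon FunctionalExtensionality.
From Stdlib Require Import Lra Lia ZArith Cantor.
Open Scope R_scope.

Section GeneratedTopology.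
Context {X : Type} (SB : (X -> Prop) -> Prop).

Definition nbhd (x : X) (P : X -> Prop) : Prop :=
  exists l : list (X -> Prop),
    (forall V, In V l -> SB V /\ V x) /\ (forall y, (forall V, In V l -> V y) -> P y).

Lemma nbhd_subbasic V x : SB V -> V x -> nbhd x V.
Proof.
  intros HV Vx. exists (V :: nil). split.
  - intros V' [<-|[]]; auto.
  - intros y Hy. apply Hy; left; reflexivity.
Qed.

Lemma nbhd_full x : nbhd x (fun _ => True).
Proof. exists nil. split; [intros V []|auto]. Qed.

Lemma nbhd_mono x (P P' : X -> Prop) :
  (forall y, P y -> P' y) -> nbhd x P -> nbhd x P'.
Proof. intros HP [l [Hl HlP]]. exists l. split; auto. Qed.

Lemma nbhd_and x (P P' : X -> Prop) :
  nbhd x P -> nbhd x P' -> nbhd x (fun y => P y /\ P' y).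
Proof.
  intros [l [Hl HlP]] [l' [Hl' HlP']]. exists (l ++ l'). split.
  - intros V HV. apply in_app_or in HV. destruct HV; auto.
  - intros y Hy. split; [apply HlP | apply HlP']; intros V HV; apply Hy, in_or_app; auto.
Qed.

Lemma nbhd_list {A : Type} x (l : list A) (P : A -> X -> Prop) :
  (forall a, In a l -> nbhd x (P a)) -> nbhd x (fun y => forall a, In a l -> P a y).
Proof.
  induction l as [|a l IH]; intros Hl.
  - apply (nbhd_mono x (fun _ => True)); [intros y _ b []|apply nbhd_full].
  - apply (nbhd_mono x (fun y => P a y /\ forall b, In b l -> P b y)).
    + intros y [Hy Hys] b [<-|Hb]; auto.
    + apply nbhd_and; [apply Hl; left; reflexivity|apply IH; intros b Hb; apply Hl; right; auto].
Qed.

Lemma subbasic_open V : SB V -> generated_open SB V.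
Proof. intros HV x Vx. apply nbhd_subbasic; auto. Qed.

Lemma open_ext (U U' : X -> Prop) :
  (forall x, U x <-> U' x) -> generated_open SB U -> generated_open SB U'.
Proof. intros E HU x Hx. apply (nbhd_mono x U); [firstorder|apply HU, E, Hx]. Qed.

Lemma open_or (U U' : X -> Prop) :
  generated_open SB U -> generated_open SB U' -> generated_open SB (fun x => U x \/ U' x).
Proof.
  intros HU HU' x [Hx|Hx]; [apply (nbhd_mono x U)|apply (nbhd_mono x U')];
    auto; [apply HU|apply HU']; auto.
Qed.

Lemma nbhd_set_open (P : X -> Prop) : generated_open SB (fun x => nbhd x P).
Proof.
  intros x [l [Hl HlP]]. exists l. split; auto.
  intros y Hy. exists l. split; auto. intros V HV. split; [apply Hl|apply Hy]; auto.
Qed.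

End GeneratedTopology.

Section MapsIntoGenerated.
Context {X Y : Type} (SBX : (X -> Prop) -> Prop) (SBY : (Y -> Prop) -> Prop) (f : X -> Y).

Lemma continuous_of_subbasis :
  (forall W x, SBY W -> W (f x) -> nbhd SBX x (fun y => W (f y))) ->
  continuous (generated_open SBX) (generated_open SBY) f.
Proof.
  intros Hf W HW x Wfx. destruct (HW (f x) Wfx) as [l [Hl HlW]].
  apply (nbhd_mono SBX x (fun y => forall V, In V l -> V (f y))).
  - intros y Hy. apply HlW, Hy.
  - apply nbhd_list. intros V HV. apply Hf; apply Hl, HV.
Qed.

Lemma open_onto_image_of_subbasis :
  (forall V x, SBX V -> V x -> nbhd SBY (f x) (fun h => forall y, f y = h -> V y)) ->
  forall U, generated_open SBX U ->
    exists W, generated_open SBY W /\ forall x, U x <-> W (f x).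
Proof.
  intros Hf U HU. exists (fun h => nbhd SBY h (fun h' => forall y, f y = h' -> U y)).
  split; [apply nbhd_set_open|]. intros x. split.
  - intros Ux. destruct (HU x Ux) as [l [Hl HlU]].
    apply (nbhd_mono SBY (f x) (fun h => forall V, In V l -> forall y, f y = h -> V y)).
    + intros h Hh y <-. apply HlU. intros V HV. apply (Hh V HV y eq_refl).
    + apply nbhd_list. intros V HV. apply Hf; apply Hl, HV.
  - intros [l [Hl HlU]]. apply (HlU (f x)); [intros V HV; apply Hl, HV|reflexivity].
Qed.

End MapsIntoGenerated.

Section LinearOrder.
Context {K : Type} {le : K -> K -> Prop} (Hlin : linear_order le).
Notation lt := (lt_of le).

Lemma ord_refl x : le x x. Proof. apply Hlin. Qed.
Lemma ord_antisym x y : le x y -> le y x -> x = y. Proof. apply Hlin. Qed.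
Lemma ord_trans x y z : le x y -> le y z -> le x z. Proof. apply Hlin. Qed.
Lemma ord_total x y : le x y \/ le y x. Proof. apply Hlin. Qed.

Lemma lt_irrefl x : ~ lt x x. Proof. intros [_ H]; auto. Qed.
Lemma lt_le x y : lt x y -> le x y. Proof. intros [H _]; auto. Qed.

Lemma lt_not_le x y : lt x y -> ~ le y x.
Proof. intros [H1 H2] H3. apply H2, ord_antisym; auto. Qed.

Lemma not_le_lt x y : ~ le x y -> lt y x.
Proof.
  intros H. destruct (ord_total x y); [tauto|]. split; auto.
  intros ->. apply H, ord_refl.
Qed.

Lemma not_lt_le x y : ~ lt x y -> le y x.
Proof. intros H. apply NNPP. intros N. apply H, not_le_lt, N. Qed.

Lemma lt_le_trans x y z : lt x y -> le y z -> lt x z.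
Proof.
  intros Hxy Hyz. split; [apply (ord_trans _ y); auto using lt_le|].
  intros ->. apply (lt_not_le _ _ Hxy Hyz).
Qed.

Lemma le_lt_trans x y z : le x y -> lt y z -> lt x z.
Proof.
  intros Hxy Hyz. split; [apply (ord_trans _ y); auto using lt_le|].
  intros ->. apply (lt_not_le _ _ Hyz Hxy).
Qed.

Lemma lt_trans x y z : lt x y -> lt y z -> lt x z.
Proof. intros Hxy Hyz. apply (lt_le_trans _ y); auto using lt_le. Qed.

Lemma lt_trichotomy x y : lt x y \/ x = y \/ lt y x.
Proof.
  destruct (classic (x = y)) as [|Hne]; auto.
  destruct (ord_total x y); [left|right; right]; split; auto.
Qed.

End LinearOrder.

Section OrderTopology.
Context {K : Type} {le : K -> K -> Prop}.
Notation lt := (lt_of le).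

Lemma ray_above_subbasic c : order_subbasis le (fun y => lt c y).
Proof. right. exists c. tauto. Qed.

Lemma ray_below_subbasic c : order_subbasis le (fun y => lt y c).
Proof. left. exists c. tauto. Qed.

Definition closed (S : K -> Prop) : Prop := order_open le (fun x => ~ S x).

Lemma closed_and S S' : closed S -> closed S' -> closed (fun x => S x /\ S' x).
Proof.
  intros HS HS'. apply (open_ext _ (fun x => ~ S x \/ ~ S' x)); [intros x; tauto|].
  apply open_or; auto.
Qed.

Context (Hlin : linear_order le).

Lemma closed_ge c : closed (fun y => le c y).
Proof.
  apply (open_ext _ (fun y => lt y c)); [|apply subbasic_open, ray_below_subbasic].
  intros y. split; [apply (lt_not_le Hlin)|apply (not_le_lt Hlin)].
Qed.

Lemma closed_le c : closed (fun y => le y c).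
Proof.
  apply (open_ext _ (fun y => lt c y)); [|apply subbasic_open, ray_above_subbasic].
  intros y. split; [apply (lt_not_le Hlin)|apply (not_le_lt Hlin)].
Qed.

Lemma closed_interval c d : closed (fun y => le c y /\ le y d).
Proof. apply closed_and; [apply closed_ge|apply closed_le]. Qed.

(* In a compact linearly ordered space every nonempty closed set has a
   maximum: otherwise the complement of [S] and the rays below points of [S]
   would form an open cover without finite subcover. *)
Lemma compact_max (Hcpt : compact_space (order_open le)) S x0 :
  closed S -> S x0 -> exists m, S m /\ forall s, S s -> le s m.
Proof.
  intros HS Sx0. apply NNPP. intros Hnomax.
  assert (Habove : forall m, S m -> exists s, S s /\ lt m s).
  { intros m Sm. apply NNPP. intros N. apply Hnomax. exists m. split; auto.
    intros s Ss. apply (not_lt_le Hlin). intros Hms. apply N; eauto. }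
  set (F := fun U : K -> Prop =>
              U = (fun x => ~ S x) \/ exists s, S s /\ U = (fun y => lt y s)).
  destruct (Hcpt F) as [l [HlF Hlcov]].
  - intros U [->|[s [_ ->]]]; [apply HS|apply subbasic_open, ray_below_subbasic].
  - intros x. destruct (classic (S x)) as [Sx|nSx].
    + destruct (Habove x Sx) as [s [Ss Hxs]]. exists (fun y => lt y s).
      split; auto. right; eauto.
    + exists (fun x => ~ S x). split; auto. left; auto.
  -
    assert (Hmiss : forall l', (forall U, In U l' -> F U) ->
                      exists m, S m /\ forall U, In U l' -> ~ U m).
    { induction l' as [|U l' IH]; intros Hl'.
      - exists x0. split; [exact Sx0|intros U []].
      - destruct IH as [m [Sm Hm]]; [intros; apply Hl'; right; auto|].
        destruct (Hl' U (or_introl eq_refl)) as [->|[s [Ss ->]]].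
        + exists m. split; auto. intros V [<-|HV]; auto.
        + destruct (ord_total Hlin s m) as [Hsm|Hms].
          * exists m. split; auto. intros V [<-|HV]; auto.
            intros Hms. apply (lt_not_le Hlin _ _ Hms Hsm).
          * exists s. split; auto. intros V [<-|HV]; [apply lt_irrefl|].
            destruct (Hl' V (or_intror HV)) as [->|[s' [_ ->]]]; [tauto|].
            intros Hss'. apply (Hm _ HV). apply (le_lt_trans Hlin _ s); auto. }
    destruct (Hmiss l HlF) as [m [Sm Hm]]. destruct (Hlcov m) as [U [HU Um]].
    apply (Hm U HU Um).
Qed.
End OrderTopology.

Section Duality.
Context {K : Type} {le : K -> K -> Prop}.
Notation lt := (lt_of le).

(* The reversed order has the same order topology; this transfers facts about
   maxima to facts about minima. *)
Definition dual_le (x y : K) : Prop := le y x.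

Lemma dual_linear : linear_order le -> linear_order dual_le.
Proof. intros [Hr [Ha [Ht Hto]]]. unfold dual_le. repeat split; eauto. Qed.

Lemma dual_lt x y : lt_of dual_le x y <-> lt y x.
Proof. unfold lt_of, dual_le. split; intros [H1 H2]; split; auto. Qed.

Lemma dual_subbasis V : order_subbasis dual_le V <-> order_subbasis le V.
Proof.
  unfold order_subbasis.
  split; intros [[c Hc]|[c Hc]]; [right|left|right|left]; exists c; intros y;
    rewrite Hc, dual_lt; tauto.
Qed.

Lemma dual_open U : order_open dual_le U <-> order_open le U.
Proof.
  split; intros HU x Ux; destruct (HU x Ux) as [l [Hl HlU]]; exists l;
    split; auto; intros V HV; destruct (Hl V HV); split; auto; apply dual_subbasis; auto.
Qed.

Context (Hlin : linear_order le).

Lemma compact_min (Hcpt : compact_space (order_open le)) S x0 :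
  closed (le := le) S -> S x0 -> exists m, S m /\ forall s, S s -> le m s.
Proof.
  intros HS Sx0. apply (compact_max (dual_linear Hlin)) with (x0 := x0); auto.
  - intros F HF Hcov. apply Hcpt; auto. intros U HU. apply dual_open; auto.
  - apply dual_open, HS.
Qed.

(* Between a point of the closed set [P] and a later point of the closed set
   [Q] there is an interval [a, b] with endpoints in [P] and [Q] whose interior
   avoids both: take [a] the last point of [P] in [x, y], then [b] the first
   point of [Q] in [a, y]. *)
Lemma gap_between (Hcpt : compact_space (order_open le)) P Q x y :
  closed (le := le) P -> closed (le := le) Q -> P x -> Q y -> le x y ->
  exists a b, le x a /\ le a b /\ le b y /\ P a /\ Q b /\
    forall z, lt a z -> lt z b -> ~ P z /\ ~ Q z.
Proof.
  intros HP HQ Px Qy Hxy.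
  destruct (compact_max Hlin Hcpt (fun w => (le x w /\ le w y) /\ P w) x)
    as [a [[[Hxa Hay] Pa] Hamax]].
  { apply closed_and; auto. apply closed_interval, Hlin. }
  { split; auto. split; auto. apply (ord_refl Hlin). }
  destruct (compact_min Hcpt (fun w => (le a w /\ le w y) /\ Q w) y)
    as [b [[[Hab Hby] Qb] Hbmin]].
  { apply closed_and; auto. apply closed_interval, Hlin. }
  { split; auto. split; auto. apply (ord_refl Hlin). }
  exists a, b. do 5 (split; [auto|]). intros z Haz Hzb. split.
  - intros Pz. apply (lt_not_le Hlin _ _ Haz), Hamax. split; [split|exact Pz].
    + apply (ord_trans Hlin _ a); [exact Hxa|apply lt_le, Haz].
    + apply (ord_trans Hlin _ b); [apply lt_le, Hzb|exact Hby].
  - intros Qz. apply (lt_not_le Hlin _ _ Hzb), Hbmin. split; [split|exact Qz].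
    + apply lt_le, Haz.
    + apply (ord_trans Hlin _ b); [apply lt_le, Hzb|exact Hby].
Qed.
End Duality.

Definition dy (k n : nat) : R := INR k / 2 ^ n.

Lemma pow2_pos n : 0 < 2 ^ n.
Proof. apply pow_lt; lra. Qed.

Lemma INR_pow2 n : INR (2 ^ n) = 2 ^ n.
Proof. rewrite pow_INR. reflexivity. Qed.

Lemma dy_scaled k n : dy k n * 2 ^ n = INR k.
Proof. unfold dy. field. apply Rgt_not_eq, pow2_pos. Qed.

Lemma dy_nonneg k n : 0 <= dy k n.
Proof. unfold dy. apply Rle_mult_inv_pos; [apply pos_INR|apply pow2_pos]. Qed.

Lemma dy_le_1 k n : dy k n <= 1 <-> (k <= 2 ^ n)%nat.
Proof.
  pose proof (dy_scaled k n). pose proof (pow2_pos n). split; intros H'.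
  - apply INR_le. rewrite INR_pow2. nra.
  - apply le_INR in H'. rewrite INR_pow2 in H'. nra.
Qed.

Lemma dy_cross k n n' : dy k n * (2 ^ n * 2 ^ n') = INR (k * 2 ^ n').
Proof. rewrite mult_INR, INR_pow2, <- (dy_scaled k n). ring. Qed.

Lemma dy_lt_nat k n k' n' : dy k n < dy k' n' -> (k * 2 ^ n' < k' * 2 ^ n)%nat.
Proof.
  intros H. apply INR_lt. rewrite <- (dy_cross k n n'), <- (dy_cross k' n' n).
  rewrite (Rmult_comm (2 ^ n')). apply Rmult_lt_compat_r; [|exact H].
  apply Rmult_lt_0_compat; apply pow2_pos.
Qed.

Lemma pow2_inv_small e : 0 < e -> exists n, / 2 ^ n < e.
Proof.
  intros He. destruct (INR_unbounded (/ e)) as [n Hn]. exists n.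
  assert (Hgrow : INR n + 1 <= 2 ^ n).
  { clear Hn. induction n as [|n IH]; [simpl; lra|]. rewrite S_INR. simpl.
    pose proof (pos_INR n). lra. }
  rewrite <- (Rinv_inv e). apply Rinv_lt_contravar; [|lra].
  apply Rmult_lt_0_compat; [apply Rinv_0_lt_compat, He|apply pow2_pos].
Qed.

Lemma dyadic_dense u v : 0 <= u -> u < v -> exists n k, u < dy k n < v.
Proof.
  intros Hu Huv. destruct (pow2_inv_small (v - u)) as [n Hn]; [lra|].
  pose proof (pow2_pos n) as Hpos.
  destruct (archimed (u * 2 ^ n)) as [Hz1 Hz2].
  assert (Hz : (0 <= up (u * 2 ^ n))%Z).
  { apply le_IZR. assert (0 <= u * 2 ^ n) by (apply Rmult_le_pos; lra). lra. }
  exists n, (Z.to_nat (up (u * 2 ^ n))).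
  pose proof (dy_scaled (Z.to_nat (up (u * 2 ^ n))) n) as Hdy.
  rewrite INR_IZR_INZ, Z2Nat.id in Hdy by exact Hz.
  assert (Hinv : / 2 ^ n * 2 ^ n = 1) by (field; lra).
  split; nra.
Qed.

Lemma two_dyadics_between u v : 0 <= u -> u < v ->
  exists n k n' k', u < dy k n /\ dy k n < dy k' n' /\ dy k' n' < v.
Proof.
  intros Hu Huv. destruct (dyadic_dense u v) as [n [k [H1 H2]]]; auto.
  destruct (dyadic_dense (dy k n) v) as [n' [k' [H3 H4]]]; [lra|auto|].
  exists n, k, n', k'. auto.
Qed.

Definition order_continuous {K : Type} (le : K -> K -> Prop) (phi : K -> R) : Prop :=
  forall x eps, 0 < eps ->
    nbhd (order_subbasis le) x (fun y => Rabs (phi y - phi x) < eps).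

Section DyadicChain.
Context {K : Type} {le : K -> K -> Prop} (Hlin : linear_order le).
Notation lt := (lt_of le).

Variables a b : K.
Hypothesis Hab : lt a b.
Hypothesis Hdense : forall c d, le a c -> le d b -> lt c d -> exists e, lt c e /\ lt e d.

Definition mid (c d : K) : K := epsilon (inhabits c) (fun e => lt c e /\ lt e d).

Lemma mid_spec c d : le a c -> le d b -> lt c d -> lt c (mid c d) /\ lt (mid c d) d.
Proof.
  intros Hac Hdb Hcd. apply (epsilon_spec (inhabits c) (fun e => lt c e /\ lt e d)).
  apply Hdense; auto.
Qed.

(* [chain n k] (for [k <= 2^n]) is the point of [a, b] labelled by the dyadic
   [k / 2^n]: level [n + 1] keeps the points of level [n] at even indices and
   inserts midpoints at odd ones. *)
Fixpoint chain (n k : nat) : K :=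
  match n with
  | O => if Nat.eqb k 0 then a else b
  | S n' => if Nat.even k then chain n' (Nat.div2 k)
            else mid (chain n' (Nat.div2 k)) (chain n' (S (Nat.div2 k)))
  end.

Lemma chain_S n k : chain (S n) k =
  if Nat.even k then chain n (Nat.div2 k)
  else mid (chain n (Nat.div2 k)) (chain n (S (Nat.div2 k))).
Proof. reflexivity. Qed.

Lemma chain_even n j : chain (S n) (2 * j) = chain n j.
Proof. rewrite chain_S, Nat.even_even, Nat.div2_double. reflexivity. Qed.

Lemma chain_odd n j : chain (S n) (S (2 * j)) = mid (chain n j) (chain n (S j)).
Proof.
  rewrite chain_S. replace (S (2 * j)) with (2 * j + 1)%nat by lia.
  rewrite Nat.even_odd, Nat.div2_odd'. reflexivity.
Qed.

Lemma chain_step n : forall k, (k < 2 ^ n)%nat ->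
  lt (chain n k) (chain n (S k)) /\ le a (chain n k) /\ le (chain n (S k)) b.
Proof.
  induction n as [|n IH]; intros k Hk.
  - simpl in Hk. replace k with 0%nat by lia. simpl.
    split; [exact Hab|split; apply (ord_refl Hlin)].
  - destruct (Nat.Even_or_Odd k) as [[j ->]|[j ->]].
    + destruct (IH j) as [Hlt [Ha Hb]]; [simpl in Hk; lia|].
      rewrite chain_even, chain_odd. destruct (mid_spec _ _ Ha Hb Hlt) as [M1 M2].
      split; [exact M1|split; [exact Ha|]].
      apply lt_le, (lt_le_trans Hlin _ _ _ M2 Hb).
    + destruct (IH j) as [Hlt [Ha Hb]]; [simpl in Hk; lia|].
      replace (2 * j + 1)%nat with (S (2 * j)) by lia.
      replace (S (S (2 * j))) with (2 * S j)%nat by lia.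
      rewrite chain_even, chain_odd. destruct (mid_spec _ _ Ha Hb Hlt) as [M1 M2].
      split; [exact M2|split; [|exact Hb]].
      apply lt_le, (le_lt_trans Hlin _ _ _ Ha M1).
Qed.

Lemma chain_mono n k k' : (k < k')%nat -> (k' <= 2 ^ n)%nat -> lt (chain n k) (chain n k').
Proof.
  intros H. induction H as [|k' Hkk' IH]; intros Hk'.
  - apply chain_step; lia.
  - apply (lt_trans Hlin _ (chain n k')); [apply IH; lia|apply chain_step; lia].
Qed.

Lemma chain_lift j n k : chain (j + n) (k * 2 ^ j) = chain n k.
Proof.
  induction j as [|j IH]; [simpl; rewrite Nat.mul_1_r; reflexivity|].
  replace (k * 2 ^ S j)%nat with (2 * (k * 2 ^ j))%nat by (simpl; lia).
  simpl plus. rewrite chain_even. exact IH.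
Qed.

Lemma chain_dy_lt n k n' k' : (k' <= 2 ^ n')%nat ->
  dy k n < dy k' n' -> lt (chain n k) (chain n' k').
Proof.
  intros Hk' Hlt. apply dy_lt_nat in Hlt.
  rewrite <- (chain_lift n' n k), <- (chain_lift n n' k'), (Nat.add_comm n n').
  apply chain_mono; [exact Hlt|]. rewrite Nat.pow_add_r. apply Nat.mul_le_mono_r, Hk'.
Qed.

(* [level x] is the supremum of the labels of chain points below [x]. *)
Definition reached (x : K) (r : R) : Prop :=
  r = 0 \/ exists n k, (k <= 2 ^ n)%nat /\ r = dy k n /\ le (chain n k) x.

Lemma reached_bound x : bound (reached x).
Proof.
  exists 1. intros r [->|[n [k [Hk [-> _]]]]]; [lra|apply dy_le_1, Hk].
Qed.

Lemma reached_zero x : exists r, reached x r.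
Proof. exists 0. left. reflexivity. Qed.

Definition level (x : K) : R :=
  proj1_sig (completeness (reached x) (reached_bound x) (reached_zero x)).

Lemma level_ub x r : reached x r -> r <= level x.
Proof. intros Hr. unfold level. destruct completeness as [m Hm]. apply Hm, Hr. Qed.

Lemma level_lub x s : (forall r, reached x r -> r <= s) -> level x <= s.
Proof.
  intros Hs. unfold level. destruct completeness as [m Hm]. simpl. apply (proj2 Hm). exact Hs.
Qed.

Lemma level_approx x r : r < level x -> exists r', reached x r' /\ r < r'.
Proof.
  intros H. apply NNPP. intros N. apply (Rlt_not_le _ _ H), level_lub.
  intros r' Hr'. apply Rnot_lt_le. intros Hrr'. apply N. eauto.
Qed.

Lemma level_range x : 0 <= level x <= 1.
Proof.
  split; [apply level_ub; left; reflexivity|].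
  apply level_lub. intros r [->|[n [k [Hk [-> _]]]]]; [lra|apply dy_le_1, Hk].
Qed.

Lemma level_low x : le x a -> level x = 0.
Proof.
  intros Hxa. apply Rle_antisym; [|apply level_range]. apply level_lub.
  intros r [->|[n [k [Hk [-> Hq]]]]]; [lra|]. apply Rnot_lt_le. intros Hpos.
  assert (Ha : lt (chain 0 0) (chain n k)).
  { apply chain_dy_lt; [exact Hk|]. replace (dy 0 0) with 0; [exact Hpos|unfold dy; simpl; lra]. }
  apply (lt_not_le Hlin _ _ Ha), (ord_trans Hlin _ x); auto.
Qed.

Lemma level_high x : le b x -> level x = 1.
Proof.
  intros Hbx. apply Rle_antisym; [apply level_range|]. apply level_ub.
  right. exists 0%nat, 1%nat. split; [simpl; lia|]. split; [unfold dy; simpl; lra|exact Hbx].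
Qed.

(* Lower bound near [x]: some chain point [c < x] has a label close below
   [level x], and the ray [(c, +oo)] keeps [level] above that label. *)
Lemma level_lower_nbhd x eps : 0 < eps ->
  nbhd (order_subbasis le) x (fun y => level x - eps < level y).
Proof.
  intros Heps. destruct (Rlt_le_dec (level x - eps) 0) as [Hneg|Hnn].
  { apply (nbhd_mono _ x (fun _ => True)); [|apply nbhd_full].
    intros y _. pose proof (level_range y). lra. }
  destruct (dyadic_dense (level x - eps) (level x)) as [n [k [Hr1 Hr2]]]; [lra|lra|].
  assert (Hk : (k <= 2 ^ n)%nat) by (apply dy_le_1; pose proof (level_range x); lra).
  destruct (level_approx x _ Hr2) as [r' [[->|[n' [k' [Hk' [-> Hq]]]]] Hrr']].
  { pose proof (dy_nonneg k n). lra. }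
  apply (nbhd_mono _ x (fun y => lt (chain n k) y)).
  - intros y Hy. enough (dy k n <= level y) by lra.
    apply level_ub. right. exists n, k. split; [exact Hk|split; [reflexivity|apply lt_le, Hy]].
  - apply nbhd_subbasic; [apply ray_above_subbasic|].
    apply (lt_le_trans Hlin _ (chain n' k')); [apply chain_dy_lt|]; auto.
Qed.

(* Upper bound near [x]: a label just above [level x] belongs to a chain
   point [c > x], and the ray [(-oo, c)] keeps [level] below that label. *)
Lemma level_upper_nbhd x eps : 0 < eps ->
  nbhd (order_subbasis le) x (fun y => level y < level x + eps).
Proof.
  intros Heps. destruct (Rlt_le_dec 1 (level x + eps)) as [Hbig|Hsmall].
  { apply (nbhd_mono _ x (fun _ => True)); [|apply nbhd_full].
    intros y _. pose proof (level_range y). lra. }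
  destruct (dyadic_dense (level x) (level x + eps)) as [n [k [Hr1 Hr2]]];
    [apply level_range|lra|].
  assert (Hk : (k <= 2 ^ n)%nat) by (apply dy_le_1; lra).
  apply (nbhd_mono _ x (fun y => lt y (chain n k))).
  - intros y Hy. enough (level y <= dy k n) by lra. apply level_lub.
    intros r [->|[n' [k' [Hk' [-> Hq]]]]]; [apply dy_nonneg|].
    apply Rnot_lt_le. intros Hlt.
    apply (lt_not_le Hlin _ _ (chain_dy_lt _ _ _ _ Hk' Hlt)).
    apply lt_le, (le_lt_trans Hlin _ _ _ Hq Hy).
  - apply nbhd_subbasic; [apply ray_below_subbasic|].
    apply (not_le_lt Hlin). intros Hq. apply (Rlt_not_le _ _ Hr1), level_ub.
    right. exists n, k. auto.
Qed.

Lemma level_continuous : order_continuous le level.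
Proof.
  intros x eps Heps.
  apply (nbhd_mono _ x (fun y => level x - eps < level y /\ level y < level x + eps)).
  - intros y [H1 H2]. apply Rabs_def1; lra.
  - apply nbhd_and; [apply level_lower_nbhd|apply level_upper_nbhd]; exact Heps.
Qed.
End DyadicChain.

Section OrderUrysohn.
Context {K : Type} {le : K -> K -> Prop} (Hlin : linear_order le).
Notation lt := (lt_of le).

Lemma indicator_continuous (U : K -> Prop) :
  order_open le U -> order_open le (fun x => ~ U x) ->
  order_continuous le (fun x => if excluded_middle_informative (U x) then 1 else 0).
Proof.
  intros HU HnU x eps Heps.
  destruct (excluded_middle_informative (U x)) as [Ux|nUx].
  - apply (nbhd_mono _ x U); [|apply HU, Ux].
    intros y Uy. destruct excluded_middle_informative; [|tauto].
    rewrite Rminus_diag, Rabs_R0. exact Heps.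
  - apply (nbhd_mono _ x (fun x => ~ U x)); [|apply HnU, nUx].
    intros y nUy. destruct excluded_middle_informative; [tauto|].
    rewrite Rminus_diag, Rabs_R0. exact Heps.
Qed.

(* If [a, b] contains a jump [c < d] with
   nothing in between, the indicator of [(c, +oo)] works; otherwise the order
   is dense on [a, b] and the dyadic chain gives [level]. *)
Lemma order_urysohn a b : lt a b ->
  exists phi : K -> R,
    (forall x, 0 <= phi x <= 1) /\ (forall x, le x a -> phi x = 0) /\
    (forall x, le b x -> phi x = 1) /\ order_continuous le phi.
Proof.
  intros Hab.
  destruct (classic (forall c d, le a c -> le d b -> lt c d ->
                       exists e, lt c e /\ lt e d)) as [Hdense|Hjump].
  - exists (level (le := le) a b). split; [|split; [|split]].
    + apply level_range.
    + apply (level_low Hlin a b Hab Hdense).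
    + apply level_high.
    + apply (level_continuous Hlin a b Hab Hdense).
  - destruct (not_all_ex_not _ _ Hjump) as [c Hc].
    destruct (not_all_ex_not _ _ Hc) as [d Hcd].
    destruct (classic (le a c)) as [Hac|]; [|tauto].
    destruct (classic (le d b)) as [Hdb|]; [|tauto].
    destruct (classic (lt c d)) as [Hlt|]; [|tauto].
    assert (Hgap : forall y, ~ lt c y <-> lt y d).
    { intros y. split.
      - intros Hy. apply (le_lt_trans Hlin _ c); [apply (not_lt_le Hlin), Hy|exact Hlt].
      - intros Hyd Hcy. apply Hcd. intros _ _ _. exists y. auto. }
    exists (fun x => if excluded_middle_informative (lt c x) then 1 else 0).
    split; [|split; [|split]].
    + intros x. destruct excluded_middle_informative; lra.
    + intros x Hxa. destruct excluded_middle_informative as [Hcx|]; [|reflexivity].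
      exfalso. apply (lt_not_le Hlin _ _ Hcx), (ord_trans Hlin _ a); auto.
    + intros x Hbx. destruct excluded_middle_informative as [|Hcx]; [reflexivity|].
      exfalso. apply Hgap in Hcx. apply (lt_not_le Hlin _ _ Hcx), (ord_trans Hlin _ b); auto.
    + apply indicator_continuous; [apply subbasic_open, ray_above_subbasic|].
      apply (open_ext _ (fun y => lt y d)); [intros y; symmetry; apply Hgap|].
      apply subbasic_open, ray_below_subbasic.
Qed.
End OrderUrysohn.

Lemma R_open_gt c : R_open (fun t => c < t).
Proof. intros t Ht. exists (t - c). split; [lra|]. intros s Hs. apply Rabs_def2 in Hs. lra. Qed.

Lemma R_open_lt c : R_open (fun t => t < c).
Proof. intros t Ht. exists (c - t). split; [lra|]. intros s Hs. apply Rabs_def2 in Hs. lra. Qed.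

Lemma coord_subbasic {Gamma : Type} (g : Gamma) (V : R -> Prop) :
  R_open V -> prod_subbasis Gamma (fun h => V (h g)).
Proof. intros HV. exists g, V. split; [exact HV|tauto]. Qed.

Section IntervalsGiveEmbedding.
Context {K : Type} {le : K -> K -> Prop} (Hlin : linear_order le).
Notation lt := (lt_of le).

Context {I : Type} (a b : I -> K) (F : I -> K -> R).
Hypothesis Hcount : forall x, countable (fun i => lt (a i) x /\ lt x (b i)).
Hypothesis Hsep : forall x y, lt x y -> exists i, le x (a i) /\ lt (a i) (b i) /\ le (b i) y.
Hypothesis F_range : forall i x, 0 <= F i x <= 1.
Hypothesis F_low : forall i x, le x (a i) -> F i x = 0.
Hypothesis F_high : forall i x, le (b i) x -> F i x = 1.
Hypothesis F_cont : forall i, order_continuous le (F i).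

Lemma F_fractional_inside i x : F i x <> 0 -> F i x <> 1 -> lt (a i) x /\ lt x (b i).
Proof.
  intros H0 H1.
  split; apply (not_le_lt Hlin); intros H; [apply H0, F_low|apply H1, F_high]; exact H.
Qed.

Lemma coords_in_Sigma x : in_Sigma01 (fun i => F i x).
Proof.
  split; [intros i; apply F_range|].
  destruct (Hcount x) as [code Hcode]. exists code.
  intros i j [Hi0 Hi1] [Hj0 Hj1]. apply Hcode; apply F_fractional_inside; auto.
Qed.

Lemma coords_separate x y : lt x y -> (fun i => F i x) <> (fun i => F i y).
Proof.
  intros Hxy E. destruct (Hsep x y Hxy) as [i [Hxa [_ Hby]]].
  assert (Ei : F i x = F i y) by exact (f_equal (fun h => h i) E).
  rewrite F_low, F_high in Ei by assumption. lra.
Qed.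

Lemma coords_injective x y : (fun i => F i x) = (fun i => F i y) -> x = y.
Proof.
  intros E. destruct (lt_trichotomy Hlin x y) as [Hxy|[Hxy|Hyx]]; auto.
  - exfalso. apply (coords_separate x y Hxy E).
  - exfalso. apply (coords_separate y x Hyx). auto.
Qed.

Lemma coords_continuous : continuous (order_open le) (prod_open I) (fun x i => F i x).
Proof.
  apply continuous_of_subbasis. intros W x [g [V [HV HW]]] Wx.
  apply HW in Wx. destruct (HV _ Wx) as [eps [Heps HVeps]].
  apply (nbhd_mono _ x (fun y => Rabs (F g y - F g x) < eps)); [|apply F_cont, Heps].
  intros y Hy. apply HW, HVeps, Hy.
Qed.

(* A ray [(-oo, c)] around [x] contains an interval [(-oo, b i)] with
   [F i x = 0]; symmetrically for [(c, +oo)]. *)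
Lemma coords_open_onto_image U : order_open le U ->
  exists W, prod_open I W /\ forall x, U x <-> W (fun i => F i x).
Proof.
  apply open_onto_image_of_subbasis. intros V x [[c Hc]|[c Hc]] Vx; apply Hc in Vx.
  - destruct (Hsep x c Vx) as [i [Hxa [_ Hbc]]].
    apply (nbhd_mono _ _ (fun h => h i < 1)).
    + intros h Hh y <-. apply Hc. apply (lt_le_trans Hlin _ (b i)); [|exact Hbc].
      apply (not_le_lt Hlin). intros Hby. rewrite F_high in Hh by exact Hby. lra.
    + apply nbhd_subbasic; [apply (coord_subbasic i (fun t => t < 1)), R_open_lt|].
      rewrite F_low by exact Hxa. lra.
  - destruct (Hsep c x Vx) as [i [Hca [_ Hbx]]].
    apply (nbhd_mono _ _ (fun h => 0 < h i)).
    + intros h Hh y <-. apply Hc. apply (le_lt_trans Hlin _ (a i)); [exact Hca|].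
      apply (not_le_lt Hlin). intros Hya. rewrite F_low in Hh by exact Hya. lra.
    + apply nbhd_subbasic; [apply (coord_subbasic i (fun t => 0 < t)), R_open_gt|].
      rewrite F_high by exact Hbx. lra.
Qed.

Lemma coords_give_atd :
  almost_totally_disconnected (order_open le).
Proof.
  exists I, (fun x i => F i x). split; [apply coords_in_Sigma|].
  split; [exact coords_injective|split; [exact coords_continuous|exact coords_open_onto_image]].
Qed.
End IntervalsGiveEmbedding.

Lemma intervals_give_atd {K : Type} {le : K -> K -> Prop} (Hlin : linear_order le)
  (I : Type) (a b : I -> K) :
  (forall i, lt_of le (a i) (b i)) ->
  (forall x, countable (fun i => lt_of le (a i) x /\ lt_of le x (b i))) ->
  (forall x y, lt_of le x y -> exists i, le x (a i) /\ lt_of le (a i) (b i) /\ le (b i) y) ->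
  almost_totally_disconnected (order_open le).
Proof.
  intros Hab Hcount Hsep.
  destruct (choice (fun i (phi : K -> R) =>
      (forall x, 0 <= phi x <= 1) /\ (forall x, le x (a i) -> phi x = 0) /\
      (forall x, le (b i) x -> phi x = 1) /\ order_continuous le phi))
    as [F HF]; [intros i; apply order_urysohn, Hab; exact Hlin|].
  apply (coords_give_atd Hlin a b F Hcount Hsep); intros i; apply HF.
Qed.

Lemma to_nat_inj p q : to_nat p = to_nat q -> p = q.
Proof. intros E. rewrite <- (cancel_of_to p), <- (cancel_of_to q), E. reflexivity. Qed.

Lemma countable_by_key {A B : Type} (S : A -> Prop) (T : B -> Prop) (key : A -> B) :
  countable T -> (forall x, S x -> T (key x)) ->
  (forall x y, S x -> S y -> key x = key y -> x = y) -> countable S.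
Proof.
  intros [code Hcode] HST Hkey. exists (fun x => code (key x)).
  intros x y Sx Sy E. apply Hkey; auto.
Qed.

Lemma countable_fst {B C : Type} (T : B -> Prop) (code : C -> nat) :
  (forall c c', code c = code c' -> c = c') ->
  countable T -> countable (fun p : B * C => T (fst p)).
Proof.
  intros Hcode [codeT HcodeT]. exists (fun p => to_nat (codeT (fst p), code (snd p))).
  intros [x c] [y c'] Tx Ty E. apply to_nat_inj in E. simpl in *. injection E as Ex Ec.
  f_equal; auto.
Qed.

Definition dyadic_pair_code (d : (nat * nat) * (nat * nat)) : nat :=
  to_nat (to_nat (fst d), to_nat (snd d)).

Lemma dyadic_pair_code_inj d d' : dyadic_pair_code d = dyadic_pair_code d' -> d = d'.
Proof.
  destruct d as [p q], d' as [p' q']. unfold dyadic_pair_code.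
  intros E. apply to_nat_inj in E. injection E as Ep Eq.
  apply to_nat_inj in Ep, Eq. subst. reflexivity.
Qed.

Section EmbeddingGivesIntervals.
Context {K : Type} {le : K -> K -> Prop} (Hlin : linear_order le).
Notation lt := (lt_of le).
Context {G : Type} (f : K -> G -> R).
Hypothesis Hcont : continuous (order_open le) (prod_open G) f.

Lemma coord_closed_le g r : closed (le := le) (fun x => f x g <= r).
Proof.
  apply (open_ext _ (fun x => r < f x g)); [intros x; split; intros; lra|].
  apply (Hcont (fun h => r < h g)), subbasic_open, (coord_subbasic g (fun t => r < t)), R_open_gt.
Qed.

Lemma coord_closed_ge g r : closed (le := le) (fun x => r <= f x g).
Proof.
  apply (open_ext _ (fun x => f x g < r)); [intros x; split; intros; lra|].
  apply (Hcont (fun h => h g < r)), subbasic_open, (coord_subbasic g (fun t => t < r)), R_open_lt.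
Qed.

Definition witness : Type := G * ((nat * nat) * (nat * nat)).
Definition band_lo (w : witness) : R := dy (fst (fst (snd w))) (snd (fst (snd w))).
Definition band_hi (w : witness) : R := dy (fst (snd (snd w))) (snd (snd (snd w))).
Definition in_band (w : witness) (x : K) : Prop := band_lo w < f x (fst w) < band_hi w.

(* [w] witnesses the interval [p]: the band lies in [0, 1], the open interval
   [p] is exactly a component of the set of points whose coordinate [fst w]
   lies in the band. *)
Definition witnessed (p : K * K) (w : witness) : Prop :=
  lt (fst p) (snd p) /\ band_hi w <= 1 /\
  (forall z, lt (fst p) z -> lt z (snd p) -> in_band w z) /\
  ~ in_band w (fst p) /\ ~ in_band w (snd p).

Lemma witnessed_unique p q w z :
  witnessed p w -> witnessed q w ->
  lt (fst p) z -> lt z (snd p) -> lt (fst q) z -> lt z (snd q) -> p = q.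
Proof.
  destruct p as [a b], q as [a' b']. simpl.
  intros [_ [_ [Hp [Ha Hb]]]] [_ [_ [Hq [Ha' Hb']]]] Haz Hzb Ha'z Hzb'.
  f_equal.
  - destruct (lt_trichotomy Hlin a a') as [H|[H|H]]; auto; exfalso.
    + apply Ha', Hp; [exact H|apply (lt_trans Hlin _ z); auto].
    + apply Ha, Hq; [exact H|apply (lt_trans Hlin _ z); auto].
  - destruct (lt_trichotomy Hlin b b') as [H|[H|H]]; auto; exfalso.
    + apply Hb, Hq; [apply (lt_trans Hlin _ z); auto|exact H].
    + apply Hb', Hp; [apply (lt_trans Hlin _ z); auto|exact H].
Qed.

Definition witnessed_interval : Type := {q : (K * K) * witness | witnessed (fst q) (snd q)}.

Definition wi_left (i : witnessed_interval) : K := fst (fst (proj1_sig i)).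
Definition wi_right (i : witnessed_interval) : K := snd (fst (proj1_sig i)).

(* A point lies in countably many witnessed intervals: the coordinate of the
   witness is one where the point is fractional, and the witness determines
   the interval. *)
Lemma witnessed_point_countable x :
  in_Sigma01 (f x) ->
  countable (fun i => lt (wi_left i) x /\ lt x (wi_right i)).
Proof.
  intros [Hrange Hfrac].
  apply (countable_by_key _ (fun w : witness => f x (fst w) <> 0 /\ f x (fst w) <> 1)
           (fun i => snd (proj1_sig i))).
  - apply (countable_fst _ dyadic_pair_code dyadic_pair_code_inj Hfrac).
  - intros [[p w] Hw] [Hax Hxb]. unfold wi_left, wi_right in *. simpl in *.
    destruct Hw as [_ [Hhi [Hband _]]].
    specialize (Hband x Hax Hxb). unfold in_band, band_lo, band_hi in *.
    pose proof (dy_nonneg (fst (fst (snd w))) (snd (fst (snd w)))). split; lra.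
  - intros [[p w] Hp] [[q w'] Hq] [Hpx1 Hpx2] [Hqx1 Hqx2] E.
    unfold wi_left, wi_right in *. simpl in *. subst w'.
    assert (p = q) as <- by (apply (witnessed_unique p q w x); auto).
    f_equal. apply proof_irrelevance.
Qed.

Hypothesis Hcpt : compact_space (order_open le).

(* If [x <= y] lie on opposite sides [P], [Q] of the band (closed, disjoint,
   together the complement of the band), a gap between them is a witnessed
   interval inside [x, y]. *)
Lemma witnessed_between_sides P Q w x y :
  (forall z, ~ in_band w z <-> P z \/ Q z) -> (forall z, P z -> Q z -> False) ->
  closed (le := le) P -> closed (le := le) Q -> band_hi w <= 1 ->
  P x -> Q y -> le x y ->
  exists p, witnessed p w /\ le x (fst p) /\ le (snd p) y.
Proof.
  intros Hout Hdisj HP HQ Hhi Px Qy Hxy.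
  destruct (gap_between Hlin Hcpt P Q x y HP HQ Px Qy Hxy)
    as [a [b [Hxa [Hab [Hby [Pa [Qb Hgap]]]]]]].
  exists (a, b). unfold witnessed. simpl. split; [|auto].
  split; [|split; [exact Hhi|split; [|split]]].
  - split; [exact Hab|]. intros <-. apply (Hdisj a Pa Qb).
  - intros z Haz Hzb. destruct (Hgap z Haz Hzb) as [nPz nQz].
    apply NNPP. intros Hz. apply Hout in Hz. tauto.
  - apply Hout. left. exact Pa.
  - apply Hout. right. exact Qb.
Qed.

Lemma witnessed_across_band w x y :
  band_lo w < band_hi w -> band_hi w <= 1 -> le x y ->
  (f x (fst w) <= band_lo w /\ band_hi w <= f y (fst w)) \/
  (band_hi w <= f x (fst w) /\ f y (fst w) <= band_lo w) ->
  exists p, witnessed p w /\ le x (fst p) /\ le (snd p) y.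
Proof.
  intros Hlohi Hhi Hxy Hsides.
  assert (Hout : forall z,
             ~ in_band w z <-> f z (fst w) <= band_lo w \/ band_hi w <= f z (fst w)).
  { intros z. unfold in_band. split.
    - intros Hz. destruct (Rle_lt_dec (f z (fst w)) (band_lo w)) as [H|H]; [left; exact H|right].
      apply Rnot_lt_le. intros H'. apply Hz. split; assumption.
    - intros [Hz|Hz] [Hb1 Hb2]; lra. }
  destruct Hsides as [[Hx Hy]|[Hx Hy]].
  - apply (witnessed_between_sides (fun z => f z (fst w) <= band_lo w)
                                    (fun z => band_hi w <= f z (fst w)));
      auto using coord_closed_le, coord_closed_ge.
    intros z Hz Hz'. lra.
  - apply (witnessed_between_sides (fun z => band_hi w <= f z (fst w))
                                    (fun z => f z (fst w) <= band_lo w));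
      auto using coord_closed_le, coord_closed_ge.
    + intros z. rewrite Hout. tauto.
    + intros z Hz Hz'. lra.
Qed.

(* Points [x < y] have distinct images, hence differ in some coordinate [g];
   a dyadic band strictly between the two values of [g] yields a witnessed
   interval inside [x, y]. *)
Lemma witnessed_separate x y :
  (forall z, in_Sigma01 (f z)) -> (forall u v, f u = f v -> u = v) -> lt x y ->
  exists i, le x (wi_left i) /\ lt (wi_left i) (wi_right i) /\ le (wi_right i) y.
Proof.
  intros Hsig Hinj Hxy.
  enough (Hw : exists p w, witnessed p w /\ le x (fst p) /\ le (snd p) y).
  { destruct Hw as [p [w [Hp [Hxp Hpy]]]].
    exists (exist _ (p, w) Hp). unfold wi_left, wi_right. simpl. split; [exact Hxp|].
    split; [exact (proj1 Hp)|exact Hpy]. }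
  assert (Hg : exists g, f x g <> f y g).
  { apply NNPP. intros N. apply (proj2 Hxy), Hinj, functional_extensionality.
    intros g. apply NNPP. intros Ng. apply N. exists g. exact Ng. }
  destruct Hg as [g Hg].
  pose proof (proj1 (Hsig x) g) as Hx01. pose proof (proj1 (Hsig y) g) as Hy01.
  destruct (two_dyadics_between (Rmin (f x g) (f y g)) (Rmax (f x g) (f y g)))
    as [n [k [n' [k' [H1 [H2 H3]]]]]].
  { apply Rmin_glb; lra. }
  { destruct (Rle_lt_dec (f x g) (f y g));
      [rewrite Rmin_left, Rmax_right|rewrite Rmin_right, Rmax_left]; lra. }
  assert (Hw : exists p, witnessed p (g, ((k, n), (k', n'))) /\ le x (fst p) /\ le (snd p) y).
  { apply witnessed_across_band; unfold band_lo, band_hi; simpl.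
    - exact H2.
    - apply Rlt_le, (Rlt_le_trans _ _ _ H3), Rmax_lub; lra.
    - exact (lt_le _ _ Hxy).
    - destruct (Rle_lt_dec (f x g) (f y g));
        [rewrite Rmin_left, Rmax_right in *|rewrite Rmin_right, Rmax_left in *]; lra. }
  destruct Hw as [p Hp]. exists p, (g, ((k, n), (k', n'))). exact Hp.
Qed.
End EmbeddingGivesIntervals.

Lemma atd_gives_intervals {K : Type} {le : K -> K -> Prop} (Hlin : linear_order le)
  (Hcpt : compact_space (order_open le)) :
  almost_totally_disconnected (order_open le) ->
  exists (I : Type) (a b : I -> K),
    (forall i, lt_of le (a i) (b i)) /\
    (forall x, countable (fun i => lt_of le (a i) x /\ lt_of le x (b i))) /\
    (forall x y, lt_of le x y ->
       exists i, le x (a i) /\ lt_of le (a i) (b i) /\ le (b i) y).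
Proof.
  intros [G [f [Hsig [Hinj [Hcont _]]]]].
  exists (witnessed_interval (le := le) f), (wi_left f), (wi_right f).
  split; [|split].
  - intros [q Hq]. exact (proj1 Hq).
  - intros x. apply witnessed_point_countable; [exact Hlin|apply Hsig].
  - intros x y Hxy. apply witnessed_separate; auto.
Qed.

Theorem lemma4 (K : Type) (le : K -> K -> Prop)
  (Hlin : linear_order le) (Hcpt : compact_space (order_open le)) :
  almost_totally_disconnected (order_open le) <->
  exists (I : Type) (a b : I -> K),
    (forall i, lt_of le (a i) (b i)) /\
    (forall x, countable (fun i => lt_of le (a i) x /\ lt_of le x (b i))) /\
    (forall x y, lt_of le x y ->
       exists i, le x (a i) /\ lt_of le (a i) (b i) /\ le (b i) y).
Proof.
  split.
  - apply atd_gives_intervals; assumption.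
  - intros [I [a [b [Hab [Hcount Hsep]]]]].
    exact (intervals_give_atd Hlin I a b Hab Hcount Hsep).
Qed.
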